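(* Let $q$ be a prime power and let $\{P_i\}$ be an infinite family of toric codes over $\mathbb{F}_q$, with $P_i\subseteq[0,q-2]^{n_i}$. If the sequence $\{M(P_i)\}$ is unbounded, then $\delta(P_i)\to0$ as $i\to\infty$.
   Context: For an integral convex polytope $P\subseteq[0,q-2]^n$: $\mathcal{L}_P=\mathrm{span}_{\mathbb{F}_q}\{x^p: p\in P\cap\mathbb{Z}^n\}$, $N(P)=\max_{0\neq f\in\mathcal{L}_P}|Z(f)|$ with $Z(f)$ the zero set of $f$ in $(\mathbb{F}_q^\times)^n$, $\delta(P)=\big((q-1)^n-N(P)\big)/(q-1)^n$, and $R(P)=|P\cap\mathbb{Z}^n|/(q-1)^n$. A sequence of nonempty integral convex polytopes $P_i\subseteq[0,q-2]^{n_i}$ is an infinite family of toric codes if $n_i\to\infty$ and $\delta(P_i)\to\delta$, $R(P_i)\to R$ for some $\delta,R\in[0,1]$. $M(P)$ denotes the largest integer $i\ge0$ such that there is a unimodular affine transformation $A$ (a map $x\mapsto Mx+\lambda$ with $M\in GL(n,\mathbb{Z})$, $\lambda\in\mathbb{Z}^n$) with $A([0,1]^i\times\{0\}^{n-i})\subseteq P$. *)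

From HB Require Import structures.
From mathcomp Require Import all_boot all_order all_algebra.
From mathcomp Require Import boolp classical_sets reals topology normedtype sequences.
Set Implicit Arguments. Unset Strict Implicit. Unset Printing Implicit Defensive.
Import Order.TTheory GRing.Theory Num.Theory.
Import numFieldNormedType.Exports.
Local Open Scope classical_set_scope.
Local Open Scope ring_scope.

(* Integral convex polytopes in R^n, given as the convex hull of a finite
   list of integer points (its generating vertices). *)
Record ipolytope (n : nat) := IPolytope { verts : seq 'rV[int]_n }.

Section Toric.
Variable R : realType.

Definition conv_hull (n : nat) (V : seq 'rV[R]_n) (x : 'rV[R]_n) : Prop :=
  exists w : 'I_(size V) -> R,
    [/\ forall j, 0 <= w j, \sum_j w j = 1 & x = \sum_j w j *: V`_j].

Definition intvR (n : nat) (v : 'rV[int]_n) : 'rV[R]_n := map_mx (fun z : int => z%:~R) v.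
Definition intmR (n : nat) (M : 'M[int]_n) : 'M[R]_n := map_mx (fun z : int => z%:~R) M.

Definition inP (n : nat) (P : ipolytope n) (x : 'rV[R]_n) : Prop :=
  conv_hull (map (@intvR n) (verts P)) x.

Definition in_box (q : nat) (n : nat) (P : ipolytope n) : Prop :=
  verts P != [::] /\
  forall v, v \in verts P -> forall j : 'I_n, (0 <= v ord0 j <= q%:Z - 2)%R.

(* M(P): A([0,1]^i x {0}^(n-i)) is contained in P for some unimodular
   affine map A x = x *m M + lam (row-vector convention), M in GL(n,Z). *)
Definition hasCube (n : nat) (P : ipolytope n) (i : nat) : Prop :=
  (i <= n)%N /\
  exists (M : 'M[int]_n) (lam : 'rV[int]_n),
    M \in unitmx /\
    forall x : 'rV[R]_n,
      (forall j, 0 <= x ord0 j <= 1) ->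
      (forall j : 'I_n, (i <= j)%N -> x ord0 j = 0) ->
      inP P (x *m intmR M + intvR lam).

Definition Mdim (n : nat) (P : ipolytope n) : nat :=
  \max_(i < n.+1 | `[< hasCube P i >]) i.

Section Code.
Variable F : finFieldType.
Local Notation q := #|F|.

Definition expR (n : nat) (e : 'rV['I_q.-1]_n) : 'rV[R]_n :=
  map_mx (fun k : 'I_q.-1 => (k : nat)%:R) e.

(* P ∩ Z^n (all of it lies in [0,q-2]^n when P does) *)
Definition latpts (n : nat) (P : ipolytope n) : {set 'rV['I_q.-1]_n} :=
  [set e | `[< inP P (expR e) >]].

(* An element f = sum_p c_p x^p of L_P is given by its coefficient function c
   supported on P ∩ Z^n; f <> 0 iff c <> 0 (monomials are independent). *)
Definition inLP (n : nat) (P : ipolytope n) (c : {ffun 'rV['I_q.-1]_n -> F}) : bool :=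
  [forall e, (e \notin latpts P) ==> (c e == 0)].

Definition evalc (n : nat) (P : ipolytope n) (c : {ffun 'rV['I_q.-1]_n -> F})
  (t : 'rV[F]_n) : F :=
  \sum_(e in latpts P) c e * \prod_(j < n) t ord0 j ^+ (e ord0 j : nat).

Definition Zcount (n : nat) (P : ipolytope n) (c : {ffun 'rV['I_q.-1]_n -> F}) : nat :=
  #|[set t : 'rV[F]_n | [forall j, t ord0 j != 0] & evalc P c t == 0]|.

Definition Nmax (n : nat) (P : ipolytope n) : nat :=
  \max_(c : {ffun 'rV['I_q.-1]_n -> F} | inLP P c && (c != 0)) Zcount P c.

Definition delta (n : nat) (P : ipolytope n) : R :=
  (((q.-1) ^ n)%:R - (Nmax P)%:R) / ((q.-1) ^ n)%:R.

Definition rate (n : nat) (P : ipolytope n) : R :=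
  (#|latpts P|)%:R / ((q.-1) ^ n)%:R.

Definition toricFamily (n : nat -> nat) (P : forall i, ipolytope (n i)) : Prop :=
  [/\ forall i, in_box q (P i),
      forall K : nat, exists i0 : nat, forall i, (i0 <= i)%N -> (K <= n i)%N &
      exists d r : R, [/\ 0 <= d <= 1, 0 <= r <= 1,
        (fun i => delta (P i)) @ \oo --> d &
        (fun i => rate (P i)) @ \oo --> r]].

End Code.
End Toric.

(* If P contains the image of the unit k-cube under a unimodular affine map
   x |-> x M + lam, then L_P contains f = x^lam * \prod_(j < k) (x^(M_j) - 1),
   M_j the j-th row of M: its monomials are the images of the cube's vertices.
   The substitution u_j = x^(M_j) is a bijection of the torus because M is in
   GL(n, Z), and f(x) <> 0 forces u_j \notin {0, 1} for j < k; hence f has at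
   most (q-2)^k (q-1)^(n-k) non-zeros on the torus and
   delta(P) <= ((q-2)/(q-1))^k.  If M(P_i) is unbounded this bound becomes
   arbitrarily small along the family, so the limit of delta(P_i) is 0. *)

From Pilot Require Import Defs.
From HB Require Import structures.
From mathcomp Require Import all_boot all_order all_algebra.
From mathcomp Require Import boolp classical_sets reals topology normedtype sequences.
From mathcomp Require Import zify lra.
Set Implicit Arguments. Unset Strict Implicit. Unset Printing Implicit Defensive.
Import Order.TTheory GRing.Theory Num.Theory.
Import numFieldNormedType.Exports.
Local Open Scope ring_scope.

Lemma card_row_box (T : finType) n (S : 'I_n -> pred T) :
  #|[set t : 'rV[T]_n | [forall j, t ord0 j \in S j]]| = (\prod_(j < n) #|S j|)%N.
Proof.
pose g (t : 'rV[T]_n) : {ffun 'I_n -> T} := [ffun j => t ord0 j].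
have g_inj : injective g.
  by move=> t1 t2 /ffunP gt12; apply/rowP => j; have := gt12 j; rewrite !ffunE !(ord1 ord0).
rewrite -(card_imset _ g_inj).
have -> : g @: [set t : 'rV[T]_n | [forall j, t ord0 j \in S j]] = [set f in family S].
  apply/finset.setP => f; rewrite inE; apply/imsetP/idP.
    by move=> [t]; rewrite inE => /forallP St ->; apply/familyP => j; rewrite ffunE.
  move=> /familyP Sf; exists (\row_j f j).
    by rewrite inE; apply/forallP => j; rewrite mxE.
  by apply/ffunP => j; rewrite ffunE mxE.
rewrite cardsE card_family /image_mem foldr_map -big_enum /=.
by elim: (enum _) => [|x s IH]; rewrite ?big_nil ?big_cons /= ?IH.
Qed.

Lemma prodn_ord_ltn_if n k a b :
  (\prod_(j < n) (if (j < k)%N then a else b) = a ^ minn k n * b ^ (n - k))%N.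
Proof.
elim: n => [|n IH]; first by rewrite big_ord0 minn0 sub0n.
rewrite big_ord_recr /= IH; case: (ltnP n k) => [nk|kn].
  have [-> -> ->] : [/\ minn k n.+1 = n.+1, n.+1 - k = 0 & n - k = 0]%N by split; lia.
  by rewrite expnSr !muln1.
have -> : minn k n.+1 = k by lia.
by rewrite subSn // expnSr mulnA.
Qed.

Section FinFieldCounts.
Variable F : finFieldType.
Local Notation q := #|F|.

Lemma card_nonzero : #|[pred y : F | y != 0]| = q.-1.
Proof. by rewrite -(cardC1 (0 : F)); apply: eq_card => y; rewrite !inE. Qed.

Lemma card_nonzero_nonone : #|[pred y : F | (y != 0) && (y != 1)]| = (q - 2)%N.
Proof.
have := cardD1 (0 : F) F; have := cardD1 (1 : F) [predD1 F & 0].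
rewrite !inE oner_neq0 /= => q1 q0.
rewrite -(eq_card (A := [predD1 [predD1 F & 0] & 1])) => [|y]; last first.
  by rewrite !inE andbT andbC.
by rewrite q0 q1 !add1n !subSS subn0.
Qed.

End FinFieldCounts.

Lemma conv_comb_bounds (R : realType) (N : nat) (w a : 'I_N -> R) (lo hi : R) :
  (forall j, 0 <= w j) -> \sum_j w j = 1 -> (forall j, lo <= a j <= hi) ->
  lo <= \sum_j w j * a j <= hi.
Proof.
move=> w_ge0 w_sum1 a_bnd; rewrite -[lo]mul1r -[hi]mul1r -w_sum1 !mulr_suml.
by apply/andP; split; apply: ler_sum => j _; apply: ler_wpM2l => //; case/andP: (a_bnd j).
Qed.

Lemma int_point_in_box (R : realType) (q n : nat) (P : ipolytope n) (e : 'rV[int]_n) :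
  in_box q P -> inP P (intvR R e) -> forall m, (0 <= e ord0 m <= q%:Z - 2)%R.
Proof.
move=> [_ vert_box] [w [w_ge0 w_sum1 e_conv]] m.
have := congr1 (fun x : 'rV[R]_n => x ord0 m) e_conv.
rewrite /intvR mxE summxE => em; rewrite -!(ler_int R) em.
under eq_bigr do rewrite mxE.
apply: conv_comb_bounds => // j.
have jV : (j < size (verts P))%N by move: (ltn_ord j); rewrite {2}size_map.
by rewrite (nth_map 0) // mxE !ler_int; apply: vert_box; apply: mem_nth.
Qed.

Lemma expfz_prod (F : fieldType) (I : finType) (a : I -> F) (z : int) :
  (\prod_i a i) ^ z = \prod_i a i ^ z.
Proof. by elim/big_rec2: _ => [|i x y _ <-]; rewrite ?exp1rz ?expfzMl. Qed.

Lemma expfz_sum (F : fieldType) (x : F) (I : finType) (z : I -> int) :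
  x != 0 -> x ^ (\sum_i z i) = \prod_i x ^ z i.
Proof. by move=> x0; elim/big_rec2: _ => [|i m y _ <-]; rewrite ?expr0z ?expfzDr. Qed.

Section ExponentRows.
Variables (F : finFieldType) (n : nat).
Local Notation q := #|F|.

Lemma card_gt1 : (1 < q)%N.
Proof. exact: card_finNzRing_gt1. Qed.

Lemma predq_gt0 : (0 < q.-1)%N.
Proof. by have := card_gt1; lia. Qed.

Definition int_in_box (e : 'rV[int]_n) : Prop := forall m, (0 <= e ord0 m <= q%:Z - 2)%R.

(* Only meaningful on rows satisfying [int_in_box]. *)
Definition exp_of_int (e : 'rV[int]_n) : 'rV['I_q.-1]_n :=
  \row_j insubd (Ordinal predq_gt0) `|e ord0 j|%N.

Lemma exp_of_int_val (e : 'rV[int]_n) (j : 'I_n) :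
  (0 <= e ord0 j <= q%:Z - 2)%R -> (exp_of_int e ord0 j : nat) = `|e ord0 j|%N.
Proof.
rewrite mxE val_insubd; case: (e ord0 j) => [m|m] //= ej.
have := card_gt1; case: ifP => // /negP; lia.
Qed.

Lemma exprz_exp_of_int (e : 'rV[int]_n) (x : F) (j : 'I_n) :
  int_in_box e -> x ^+ (exp_of_int e ord0 j : nat) = x ^ (e ord0 j).
Proof. by move=> e_box; rewrite exp_of_int_val //; case: (e ord0 j) (e_box j). Qed.

Lemma expR_exp_of_int (R : realType) (e : 'rV[int]_n) :
  int_in_box e -> Defs.expR R (exp_of_int e) = intvR R e.
Proof.
move=> e_box; apply/rowP => j; rewrite [LHS]mxE [RHS]mxE exp_of_int_val //.
by case: (e ord0 j) (e_box j).
Qed.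

Lemma exp_of_int_inj (e1 e2 : 'rV[int]_n) :
  int_in_box e1 -> int_in_box e2 -> exp_of_int e1 = exp_of_int e2 -> e1 = e2.
Proof.
move=> e1_box e2_box e12; apply/rowP => j.
have := congr1 (fun e : 'rV['I_q.-1]_n => (e ord0 j : nat)) e12.
rewrite /= !exp_of_int_val //; move: (e1_box j) (e2_box j).
by case: (e1 ord0 j) => [a|a] //; case: (e2 ord0 j) => [b|b] // _ _ /= ->.
Qed.

End ExponentRows.

Section CubeCode.
Variables (R : realType) (F : finFieldType) (n : nat) (P : ipolytope n) (k : nat).
Variables (M : 'M[int]_n) (lam : 'rV[int]_n).
Local Notation q := #|F|.
Hypothesis P_box : in_box q P.
Hypothesis M_unit : M \in unitmx.
Hypothesis k_le_n : (k <= n)%N.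
Hypothesis cube_in_P : forall x : 'rV[R]_n, (forall j, 0 <= x ord0 j <= 1) ->
  (forall j : 'I_n, (k <= j)%N -> x ord0 j = 0) -> inP P (x *m intmR R M + intvR R lam).

Definition cube_vertex (f : {ffun 'I_n -> bool}) : 'rV[int]_n := \row_j ((f j : nat) : int).
Definition cube_point f := cube_vertex f *m M + lam.
Definition face_vertex (f : {ffun 'I_n -> bool}) := [forall j : 'I_n, (k <= j)%N ==> ~~ f j].

Lemma cube_point_inP f : face_vertex f -> inP P (intvR R (cube_point f)).
Proof.
move=> /forallP f_face.
have -> : intvR R (cube_point f) = intvR R (cube_vertex f) *m intmR R M + intvR R lam.
  apply/rowP => m; rewrite !mxE intrD rmorph_sum /=; congr (_ + _).
  by apply: eq_bigr => j _; rewrite !mxE intrM.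
apply: cube_in_P => j; rewrite !mxE; first by case: (f j); rewrite /= ?lexx ?ler01.
by move=> kj; have := f_face j; rewrite kj; case: (f j).
Qed.

Lemma cube_point_box f : face_vertex f -> int_in_box F (cube_point f).
Proof. by move=> f_face; apply: (int_point_in_box P_box); apply: cube_point_inP. Qed.

Lemma cube_point_lat f : face_vertex f -> exp_of_int F (cube_point f) \in latpts R F P.
Proof.
move=> f_face; rewrite inE; apply/asboolP.
by rewrite expR_exp_of_int; [apply: cube_point_inP | apply: cube_point_box].
Qed.

Lemma cube_point_inj f g : face_vertex f -> face_vertex g ->
  exp_of_int F (cube_point f) = exp_of_int F (cube_point g) -> f = g.
Proof.
move=> f_face g_face /exp_of_int_inj fg.
have /addIr fMgM := fg (cube_point_box f_face) (cube_point_box g_face).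
have fg_vert : cube_vertex f = cube_vertex g.
  by rewrite -(mulmxK M_unit (cube_vertex f)) fMgM mulmxK.
apply/ffunP => j; have := congr1 (fun x : 'rV[int]_n => x ord0 j) fg_vert.
by rewrite !mxE; case: (f j); case: (g j).
Qed.

(* The coefficient of x^(lam + f M) in x^lam * \prod_(j < k) (x^(M_j) - 1). *)
Definition cube_sign (f : {ffun 'I_n -> bool}) : F :=
  \prod_(j < n) (if (j < k)%N then (if f j then 1 else -1) else (if f j then 0 else 1)).

Lemma cube_sign_face f : cube_sign f != 0 -> face_vertex f.
Proof.
move=> f_sign; apply/forallP => j; apply/implyP => kj; apply/negP => fj.
by move: f_sign; rewrite /cube_sign (bigD1 j) //= ltnNge kj fj mul0r eqxx.
Qed.

Definition cube_code : {ffun 'rV['I_q.-1]_n -> F} :=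
  [ffun e => \sum_(f | exp_of_int F (cube_point f) == e) cube_sign f].

Lemma cube_code_inLP : inLP R P cube_code.
Proof.
apply/forallP => e; apply/implyP => e_lat; rewrite ffunE; apply/eqP.
apply: big1 => f /eqP fe; case: (eqVneq (cube_sign f) 0) => // /cube_sign_face /cube_point_lat.
by rewrite fe (negbTE e_lat).
Qed.

Lemma cube_code_neq0 : cube_code != 0.
Proof.
pose f0 : {ffun 'I_n -> bool} := [ffun => false].
have f0_face : face_vertex f0 by apply/forallP => j; rewrite ffunE implybT.
have f0_sign : cube_sign f0 != 0.
  by apply/prodf_neq0 => j _; rewrite ffunE; case: ifP; rewrite ?oppr_eq0 oner_neq0.
apply: contra_neq f0_sign => code0.
have := congr1 (fun c : {ffun 'rV['I_q.-1]_n -> F} => c (exp_of_int F (cube_point f0))) code0.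
rewrite !ffunE /= (bigD1 f0) //= big1 ?addr0 // => f /andP[/eqP f_f0 f_neq].
case: (eqVneq (cube_sign f) 0) => // /cube_sign_face f_face.
by move: f_neq; rewrite (cube_point_inj f_face f0_face f_f0) eqxx.
Qed.

Definition in_torus (t : 'rV[F]_n) := [forall j, t ord0 j != 0].
Definition monomial (e : 'rV['I_q.-1]_n) (t : 'rV[F]_n) :=
  \prod_(j < n) t ord0 j ^+ (e ord0 j : nat).
Definition lam_monomial (t : 'rV[F]_n) := \prod_m t ord0 m ^ (lam ord0 m).

(* u_j = t^(M_j); the torus analogue of the linear map x |-> x M. *)
Definition torus_subst (t : 'rV[F]_n) : 'rV[F]_n := \row_j \prod_m t ord0 m ^ (M j m).

Lemma torus_subst_torus t : in_torus t -> in_torus (torus_subst t).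
Proof.
move=> /forallP t_torus; apply/forallP => j; rewrite mxE.
by apply/prodf_neq0 => m _; apply: expfz_neq0.
Qed.

Lemma torus_substK t l : in_torus t -> \prod_j torus_subst t ord0 j ^ (invmx M l j) = t ord0 l.
Proof.
move=> /forallP t_torus.
under eq_bigr do rewrite mxE expfz_prod.
under eq_bigr do under eq_bigr do rewrite exprz_exp.
rewrite exchange_big /=.
under eq_bigr => m _ do rewrite -(expfz_sum _ (t_torus m)).
have MinvM m : \sum_j M j m * invmx M l j = (1%:M : 'M[int]_n) l m.
  by rewrite -(mulVmx M_unit) mxE; apply: eq_bigr => j _; apply: mulrC.
under eq_bigr do rewrite MinvM.
rewrite (bigD1 l) //= mxE eqxx expr1z big1 ?mulr1 // => m ml.
by rewrite mxE eq_sym (negbTE ml) expr0z.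
Qed.

Lemma monomial_cube_point f t : in_torus t -> face_vertex f ->
  monomial (exp_of_int F (cube_point f)) t =
  lam_monomial t * \prod_j (if f j then torus_subst t ord0 j else 1).
Proof.
move=> /forallP t_torus f_face; rewrite /monomial.
rewrite (eq_bigr (fun m => t ord0 m ^ cube_point f ord0 m)) => [|m _]; last first.
  exact: exprz_exp_of_int (cube_point_box f_face).
rewrite /cube_point /lam_monomial.
under eq_bigr do rewrite mxE addrC (expfzDr _ _ (t_torus _)) mxE (expfz_sum _ (t_torus _)).
rewrite big_split /=; congr (_ * _).
rewrite exchange_big /=; apply: eq_bigr => j _; rewrite !mxE.
case: (f j) => /=; first by apply: eq_bigr => m _; rewrite mul1r.
by apply: big1 => m _; rewrite mul0r expr0z.
Qed.

Lemma evalc_cube_code_sum t : evalc R P cube_code t =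
  \sum_(f | exp_of_int F (cube_point f) \in latpts R F P)
    cube_sign f * monomial (exp_of_int F (cube_point f)) t.
Proof.
rewrite /evalc; under eq_bigr do rewrite ffunE mulr_suml.
rewrite [RHS](partition_big (fun f => exp_of_int F (cube_point f)) (mem (latpts R F P))) //=.
apply: eq_bigr => e e_lat; apply: eq_big => [f|f /eqP -> //].
by case: (eqVneq (exp_of_int F (cube_point f)) e) => [->|_]; rewrite ?e_lat ?andbF ?eqxx.
Qed.

Definition cube_factor (t : 'rV[F]_n) (j : 'I_n) (b : bool) : F :=
  if (j < k)%N then (if b then torus_subst t ord0 j else -1) else (if b then 0 else 1).

Lemma cube_sign_monomial f t :
  cube_sign f * \prod_j (if f j then torus_subst t ord0 j else 1) = \prod_j cube_factor t j (f j).
Proof.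
rewrite /cube_sign -big_split; apply: eq_bigr => j _; rewrite /cube_factor.
by case: ifP; case: (f j); rewrite /= ?mul1r ?mulr1 ?mul0r ?mulN1r.
Qed.

Lemma evalc_cube_code t : in_torus t -> evalc R P cube_code t =
  lam_monomial t * \prod_(j < n) (if (j < k)%N then torus_subst t ord0 j - 1 else 1).
Proof.
move=> t_torus; rewrite evalc_cube_code_sum big_mkcond /=.
transitivity (\sum_(f : {ffun 'I_n -> bool}) lam_monomial t * \prod_j cube_factor t j (f j)).
  apply: eq_bigr => f _; rewrite -cube_sign_monomial.
  have [->|/cube_sign_face f_face] := eqVneq (cube_sign f) 0.
    by rewrite !mul0r mulr0; case: ifP.
  by rewrite cube_point_lat // monomial_cube_point // mulrCA.
rewrite -mulr_sumr -(bigA_distr_bigA (fun j b => cube_factor t j b)); congr (_ * _).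
by apply: eq_bigr => j _; rewrite big_bool /cube_factor; case: (j < k)%N; rewrite /= ?add0r.
Qed.

Definition nonzero_range (j : 'I_n) : pred F :=
  if (j < k)%N then [pred y : F | (y != 0) && (y != 1)] else [pred y : F | y != 0].

Lemma card_torus : #|[set t : 'rV[F]_n | in_torus t]| = (q.-1 ^ n)%N.
Proof.
have := card_row_box (fun _ : 'I_n => [pred y : F | y != 0]).
rewrite (eq_bigr (fun=> q.-1)) => [|j _]; last exact: card_nonzero.
by rewrite prod_nat_const card_ord => <-; apply: eq_card => t; rewrite !inE.
Qed.

Lemma card_nonzero_range : #|[set t : 'rV[F]_n | [forall j, t ord0 j \in nonzero_range j]]| =
  ((q - 2) ^ k * q.-1 ^ (n - k))%N.
Proof.
rewrite card_row_box (eq_bigr (fun j : 'I_n => if (j < k)%N then (q - 2)%N else q.-1)).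
  by rewrite prodn_ord_ltn_if (minn_idPl k_le_n).
by move=> j _; rewrite /nonzero_range; case: ifP; rewrite ?card_nonzero ?card_nonzero_nonone.
Qed.

Lemma Zcount_cube_code : (q.-1 ^ n - (q - 2) ^ k * q.-1 ^ (n - k) <= Zcount R P cube_code)%N.
Proof.
set E := [set t : 'rV[F]_n | evalc R P cube_code t == 0].
set T := [set t : 'rV[F]_n | in_torus t].
have -> : Zcount R P cube_code = #|T :&: E|.
  by apply: eq_card => t; rewrite !inE andbC.
have subst_inj : {in T :\: E &, injective torus_subst}.
  move=> t1 t2; rewrite !inE => /andP[_ t1_torus] /andP[_ t2_torus] t12.
  by apply/rowP => l; rewrite -(torus_substK l t1_torus) -(torus_substK l t2_torus) t12.
have subst_range : torus_subst @: (T :\: E) \subset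
    [set t : 'rV[F]_n | [forall j, t ord0 j \in nonzero_range j]].
  apply/fintype.subsetP => y /finset.imsetP [t]; rewrite !inE => /andP[t_nz t_torus] ->.
  have /forallP u_torus := torus_subst_torus t_torus.
  apply/forallP => j; rewrite /nonzero_range; case: ifP => kj; rewrite !inE u_torus //=.
  apply: contra t_nz => /eqP u1.
  by rewrite evalc_cube_code // (bigD1 j) //= kj u1 subrr mul0r mulr0.
have := subset_leq_card subst_range; rewrite card_in_imset // card_nonzero_range.
by have := cardsID E T; rewrite card_torus; lia.
Qed.

Lemma Nmax_cube_code : (q.-1 ^ n - (q - 2) ^ k * q.-1 ^ (n - k) <= Nmax R F P)%N.
Proof.
apply: leq_trans Zcount_cube_code _.
by apply: (leq_bigmax_cond (F := fun c => Zcount R P c)); rewrite cube_code_inLP cube_code_neq0.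
Qed.

End CubeCode.

Section DeltaBound.
Variables (R : realType) (F : finFieldType).
Local Notation q := #|F|.

Definition cube_ratio : R := (q - 2)%:R / q.-1%:R.

Lemma cube_ratio_ge0 : 0 <= cube_ratio.
Proof. by rewrite divr_ge0. Qed.

Lemma cube_ratio_lt1 : cube_ratio < 1.
Proof.
rewrite /cube_ratio ltr_pdivrMr ?ltr0n ?predq_gt0 // mul1r ltr_nat.
by have := card_gt1 F; lia.
Qed.

Lemma delta_le1 n (P : ipolytope n) : delta R F P <= 1.
Proof.
rewrite ler_pdivrMr ?ltr0n ?expn_gt0 ?predq_gt0 // mul1r.
by rewrite lerBlDr lerDl ler0n.
Qed.

Lemma delta_le_cube_ratio n (P : ipolytope n) k :
  in_box q P -> hasCube R P k -> delta R F P <= cube_ratio ^+ k.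
Proof.
move=> P_box [k_le_n [M [lam [M_unit cube_in_P]]]].
have := Nmax_cube_code P_box M_unit k_le_n cube_in_P; rewrite leq_subLR => N_ge.
rewrite ler_pdivrMr ?ltr0n ?expn_gt0 ?predq_gt0 //.
have -> : cube_ratio ^+ k * (q.-1 ^ n)%:R = ((q - 2) ^ k * q.-1 ^ (n - k))%N%:R.
  rewrite -(subnKC k_le_n) expnD !natrM !natrX expr_div_n subnKC // mulrA divfK //.
  by rewrite expf_neq0 // gt_eqF // ltr0n predq_gt0.
by rewrite lerBlDr -natrD ler_nat; lia.
Qed.

Lemma Mdim_hasCube n (P : ipolytope n) : Mdim R P = 0%N \/ hasCube R P (Mdim R P).
Proof.
rewrite /Mdim; elim/big_ind: _ => [|x y x_cube y_cube|i /asboolP]; [by left | | by right].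
by case: (leqP x y).
Qed.

Lemma delta_le_cube_ratio_Mdim n (P : ipolytope n) :
  in_box q P -> delta R F P <= cube_ratio ^+ Mdim R P.
Proof.
move=> P_box; case: (Mdim_hasCube P) => [->|]; last exact: delta_le_cube_ratio.
by rewrite expr0 delta_le1.
Qed.

End DeltaBound.

Lemma unbounded_from (m : nat -> nat) :
  (forall K, exists i, (K <= m i)%N) -> forall N K, exists2 i, (N <= i)%N & (K <= m i)%N.
Proof.
move=> m_unbounded N K; have [i] := m_unbounded (maxn K (\max_(j < N) m j).+1).
rewrite geq_max => /andP[Ki mi]; exists i => //; rewrite leqNgt; apply: contraL mi => iN.
by rewrite -leqNgt (@leq_bigmax _ (fun j : 'I_N => m j) (Ordinal iN)).
Qed.

Local Open Scope classical_set_scope.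

Lemma cvg_le0_of_pow_bound (R : realType) (u : R^nat) (m : nat -> nat) (rho d : R) :
  0 <= rho -> rho < 1 -> u @ \oo --> d -> (forall i, u i <= rho ^+ m i) ->
  (forall K, exists i, (K <= m i)%N) -> d <= 0.
Proof.
move=> rho_ge0 rho_lt1 u_cvg u_le m_unbounded; rewrite leNgt; apply/negP => d_gt0.
have d2_gt0 : 0 < d / 2 by rewrite divr_gt0.
have [N _ u_near] := proj1 (cvgrPdist_lt _ _) u_cvg _ d2_gt0.
have rho_norm : `|rho| < 1 by rewrite ger0_norm.
have [K _ pow_small] := proj1 (cvgrPdist_lt _ _) (cvg_expr rho_norm) _ d2_gt0.
have [i iN Ki] := unbounded_from m_unbounded N K.
have := pow_small _ Ki; rewrite /= sub0r normrN ger0_norm ?exprn_ge0 // => pow_lt.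
have := ler_norm (d - u i); have := u_near _ iN; have := u_le i; rewrite /=; lra.
Qed.

Theorem mainTheorem12 (R : realType) (F : finFieldType) (n : nat -> nat)
    (P : forall i, ipolytope (n i)) :
  toricFamily R F P ->
  (forall K : nat, exists i : nat, (K <= Mdim R (P i))%N) ->
  (fun i => delta R F (P i)) @ \oo --> (0 : R).
Proof.
move=> [P_box _ [d [r [/andP[d_ge0 _] _ delta_cvg _]]]] Mdim_unbounded.
have d_le0 : d <= 0.
  apply: (cvg_le0_of_pow_bound (cube_ratio_ge0 R F) (cube_ratio_lt1 R F) delta_cvg).
    by move=> i; apply: delta_le_cube_ratio_Mdim.
  exact: Mdim_unbounded.
by have <- : d = 0 by apply/le_anti; rewrite d_le0.
Qed.
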